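(* Let $f_0$ be a positive integer. There exists a toric line arrangement in $\mathbb{T}^2$ consisting of exactly $3$ lines with $f_0$ vertices and $f_2=f_0$ chambers if and only if $f_0\ge 2$.
   Context: Let $\mathbb{T}^2=\mathbb{R}^2/\mathbb{Z}^2$ with quotient map $\pi:\mathbb{R}^2\to\mathbb{T}^2$. A toric line is the image $\pi(L)$ of a line $L=\{(x,y)\in\mathbb{R}^2: ax+by=c\}$ with $a,b\in\mathbb{Z}$ coprime and $c\in\mathbb{R}$; it is said to be of type $(a,b)$. A toric line arrangement is a finite set $\mathcal{A}=\{l_1,\dots,l_n\}$ of distinct toric lines which is essential, i.e. not all of its lines are of the same type (not all lines are parallel). The vertices of $\mathcal{A}$ are the points of $\mathbb{T}^2$ lying on at least two lines of $\mathcal{A}$; the chambers are the connected components of $\mathbb{T}^2\setminus\bigcup_i l_i$. We write $f_0$ and $f_2$ for the numbers of vertices and chambers. *)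

(* real plane R^2, torus T^2 = R^2 / Z^2 encoded via Z^2-invariant subsets. *)
From Stdlib Require Import Reals ZArith List.
Open Scope R_scope.

Definition pt : Type := (R * R)%type.

Definition shift (p : pt) (m n : Z) : pt := (fst p + IZR m, snd p + IZR n).

Definition tor_eq (p q : pt) : Prop := exists m n : Z, p = shift q m n.

Record line : Type := Line { la : Z; lb : Z; lc : R; lcop : Z.gcd la lb = 1%Z }.

Definition on_line (l : line) (p : pt) : Prop :=
  exists m n : Z, IZR (la l) * fst (shift p m n) + IZR (lb l) * snd (shift p m n) = lc l.

Definition same_toric_line (l l' : line) : Prop := forall p, on_line l p <-> on_line l' p.

(* same type (a,b), types being defined up to sign since (a,b,c) and (-a,-b,-c)
   define the same line *)
Definition same_type (l l' : line) : Prop :=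
  (la l = la l' /\ lb l = lb l') \/ (la l = (- la l')%Z /\ lb l = (- lb l')%Z).

Definition distinct_lines (A : list line) : Prop :=
  ForallOrdPairs (fun l l' => ~ same_toric_line l l') A.

Definition essential (A : list line) : Prop :=
  exists l l', In l A /\ In l' A /\ ~ same_type l l'.

Definition toric_arrangement (A : list line) : Prop := distinct_lines A /\ essential A.

Definition vertex (A : list line) (p : pt) : Prop :=
  exists l l', In l A /\ In l' A /\ ~ same_toric_line l l' /\ on_line l p /\ on_line l' p.

Definition in_compl (A : list line) (p : pt) : Prop :=
  forall l, In l A -> ~ on_line l p.

Definition invariant (S : pt -> Prop) : Prop :=
  forall p m n, S p <-> S (shift p m n).

(* open subsets of R^2 (quotient topology: a subset of T^2 is open iff its
   preimage is open in R^2) *)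
Definition open2 (U : pt -> Prop) : Prop :=
  forall p, U p -> exists eps, 0 < eps /\
    forall q, Rabs (fst q - fst p) < eps -> Rabs (snd q - snd p) < eps -> U q.

Definition torus_connected (S : pt -> Prop) : Prop :=
  invariant S /\
  ~ (exists U V : pt -> Prop,
        invariant U /\ invariant V /\ open2 U /\ open2 V /\
        (forall p, S p -> U p \/ V p) /\
        (forall p, S p -> U p -> V p -> False) /\
        (exists p, S p /\ U p) /\ (exists p, S p /\ V p)).

Definition same_chamber (A : list line) (p q : pt) : Prop :=
  exists S : pt -> Prop, torus_connected S /\ (forall x, S x -> in_compl A x) /\ S p /\ S q.

Definition num_classes (P : pt -> Prop) (E : pt -> pt -> Prop) (k : nat) : Prop :=
  exists s : list pt, length s = k /\ Forall P s /\
    ForallOrdPairs (fun x y => ~ E x y) s /\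
    (forall p, P p -> exists q, In q s /\ E p q).

Definition f0_is (A : list line) (k : nat) : Prop := num_classes (vertex A) tor_eq k.
Definition f2_is (A : list line) (k : nat) : Prop := num_classes (in_compl A) (same_chamber A) k.

(* If f0 = m + 2 with m >= 0, the lines x = 0, y = 0 and x + m y = 1/2 work: they meet in the m + 2
   points (0,0), (1/2,0) and (0, (j + 1/2)/m), and the integer
   [x + m y - 1/2] - m [y] - [x] is invariant under Z^2 and locally constant off the lines, takes
   each value -1, ..., m exactly on one convex piece of the unit square, hence separates the
   complement into m + 2 chambers.

   Conversely, suppose three lines have a single vertex. Each line meets a line of another type,
   so all three pass through that vertex, and two lines of the same type through a common point
   coincide; hence the lines are concurrent and pairwise transversal. Writing t_i for the affine
   form of l_i, the combination det(l2,l3) [t1] + det(l3,l1) [t2] + det(l1,l2) [t3] is again a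
   chamber invariant, but it jumps by det(l1,l2) <> 0 across l3 next to the vertex, so there are
   at least two chambers. *)

From Stdlib Require Import Reals ZArith List Lra Lia Classical.
(* imported after ZArith so that [shift] denotes the lattice translation, not [Pos.shift] *)
Open Scope R_scope.

Definition in_strip (f : Z) (x : R) : Prop := IZR f < x < IZR f + 1.

Lemma Int_part_bounds x : IZR (Int_part x) <= x < IZR (Int_part x) + 1.
Proof. destruct (base_Int_part x). lra. Qed.

Lemma Int_part_unique z x : IZR z <= x < IZR z + 1 -> Int_part x = z.
Proof. intros H. symmetry. apply Int_part_spec. lra. Qed.

Lemma Int_part_in_strip f x : in_strip f x -> Int_part x = f.
Proof. intros H. apply Int_part_unique. unfold in_strip in H. lra. Qed.

Lemma Int_part_plus_IZR x z : Int_part (x + IZR z) = (Int_part x + z)%Z.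
Proof. apply Int_part_unique. rewrite plus_IZR. destruct (Int_part_bounds x). lra. Qed.

Lemma in_strip_not_IZR f x z : in_strip f x -> x <> IZR z.
Proof.
  intros [H1 H2] ->. apply lt_IZR in H1. rewrite <- plus_IZR in H2.
  apply lt_IZR in H2. lia.
Qed.

Lemma in_strip_Int_part x : (forall z, x <> IZR z) -> in_strip (Int_part x) x.
Proof.
  intros H. destruct (Int_part_bounds x) as [[Hlt | Heq] Hup]; [split; lra |].
  exfalso. exact (H _ (eq_sym Heq)).
Qed.

Lemma IZR_neq_half z w : IZR z <> IZR w + 1/2.
Proof. intros E. apply (in_strip_not_IZR w (IZR w + 1/2) z); [split; lra | auto]. Qed.

Definition level (l : line) (p : pt) : R :=
  IZR (la l) * fst p + IZR (lb l) * snd p - lc l.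

Lemma level_shift l p m n : level l (shift p m n) = level l p + IZR (la l * m + lb l * n).
Proof. unfold level, shift; simpl. rewrite plus_IZR, !mult_IZR. ring. Qed.

Lemma Int_part_level_shift l p m n :
  Int_part (level l (shift p m n)) = (Int_part (level l p) + (la l * m + lb l * n))%Z.
Proof. rewrite level_shift. apply Int_part_plus_IZR. Qed.

(* Bezout's identity u a + v b = 1 lets any integer shift of the level be realised by a lattice translation. *)
Lemma on_line_level l p : on_line l p <-> exists z, level l p = IZR z.
Proof.
  split.
  - intros [m [n H]]. exists (- (la l * m + lb l * n))%Z.
    pose proof (level_shift l p m n) as S. unfold level in S at 1. rewrite H in S.
    rewrite opp_IZR. lra.
  - intros [z Hz]. destruct (Z.gcd_bezout _ _ _ (lcop l)) as [u [v Huv]].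
    exists (- z * u)%Z, (- z * v)%Z.
    assert (E : IZR (la l * (- z * u) + lb l * (- z * v)) = - IZR z).
    { replace (la l * (- z * u) + lb l * (- z * v))%Z with (- (z * (u * la l + v * lb l)))%Z
        by ring.
      rewrite Huv, Z.mul_1_r. apply opp_IZR. }
    pose proof (level_shift l p (- z * u) (- z * v)) as S. rewrite E, Hz in S.
    unfold level in S. lra.
Qed.

Lemma on_line_shift l p m n : on_line l (shift p m n) <-> on_line l p.
Proof.
  rewrite !on_line_level, level_shift. set (k := (la l * m + lb l * n)%Z).
  split; intros [z Hz].
  - exists (z - k)%Z. rewrite minus_IZR. lra.
  - exists (z + k)%Z. rewrite plus_IZR. lra.
Qed.

Lemma on_line_tor_eq l p q : tor_eq p q -> on_line l p <-> on_line l q.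
Proof. intros [m [n ->]]. apply on_line_shift. Qed.

Lemma in_compl_shift A p m n : in_compl A (shift p m n) <-> in_compl A p.
Proof.
  unfold in_compl. split; intros H l Hl; rewrite <- (on_line_shift l p m n) || rewrite (on_line_shift l p m n);
    auto.
Qed.

Lemma in_strip_level l p : ~ on_line l p -> in_strip (Int_part (level l p)) (level l p).
Proof. intros H. apply in_strip_Int_part. intros z Hz. apply H, on_line_level. eauto. Qed.

Lemma not_on_line_in_strip l p f : in_strip f (level l p) -> ~ on_line l p.
Proof. intros Hs Hon. apply on_line_level in Hon as [z Hz]. exact (in_strip_not_IZR _ _ _ Hs Hz). Qed.

Lemma level_near l p f : in_strip f (level l p) ->
  exists eps, 0 < eps /\ forall q, Rabs (fst q - fst p) < eps -> Rabs (snd q - snd p) < eps ->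
    in_strip f (level l q).
Proof.
  intros [H1 H2].
  set (g := Rmin (level l p - IZR f) (IZR f + 1 - level l p)).
  assert (Hg : 0 < g) by (unfold g; apply Rmin_glb_lt; lra).
  set (a := Rabs (IZR (la l))). set (b := Rabs (IZR (lb l))).
  assert (Ha : 0 <= a) by apply Rabs_pos. assert (Hb : 0 <= b) by apply Rabs_pos.
  exists (g / (a + b + 1)). split; [apply Rdiv_lt_0_compat; lra |].
  intros q Hx Hy.
  assert (Hd : Rabs (level l q - level l p) <= a * Rabs (fst q - fst p) + b * Rabs (snd q - snd p)).
  { replace (level l q - level l p)
      with (IZR (la l) * (fst q - fst p) + IZR (lb l) * (snd q - snd p)) by (unfold level; ring).
    eapply Rle_trans; [apply Rabs_triang |]. rewrite !Rabs_mult. apply Rle_refl. }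
  assert (Hsmall : a * Rabs (fst q - fst p) + b * Rabs (snd q - snd p) < g).
  { set (e := g / (a + b + 1)) in *.
    assert (Ee : e * (a + b + 1) = g) by (unfold e; field; lra).
    assert (0 < e) by (unfold e; apply Rdiv_lt_0_compat; lra).
    assert (a * Rabs (fst q - fst p) <= a * e) by (apply Rmult_le_compat_l; lra).
    assert (b * Rabs (snd q - snd p) <= b * e) by (apply Rmult_le_compat_l; lra).
    lra. }
  assert (g <= level l p - IZR f) by apply Rmin_l.
  assert (g <= IZR f + 1 - level l p) by apply Rmin_r.
  assert (Hlt : Rabs (level l q - level l p) < g) by lra.
  apply Rabs_def2 in Hlt. split; lra.
Qed.

Lemma in_compl_near A p : in_compl A p ->
  exists eps, 0 < eps /\ forall q, Rabs (fst q - fst p) < eps -> Rabs (snd q - snd p) < eps ->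
    forall l, In l A -> in_strip (Int_part (level l p)) (level l q).
Proof.
  induction A as [| l0 A IH]; intros Hc.
  - exists 1. split; [lra |]. intros q _ _ l [].
  - destruct IH as [e1 [He1 H1]]; [intros l Hl; apply Hc; now right |].
    destruct (level_near l0 p _ (in_strip_level l0 p (Hc l0 (or_introl eq_refl))))
      as [e2 [He2 H2]].
    exists (Rmin e1 e2). split; [now apply Rmin_glb_lt |].
    intros q Hx Hy l [<- | Hl].
    + apply H2; eapply Rlt_le_trans; eauto; apply Rmin_r.
    + apply H1; auto; eapply Rlt_le_trans; eauto; apply Rmin_l.
Qed.

Section ChamberInvariant.

Variable A : list line.
Variable H : pt -> Z.
Hypothesis H_shift : forall p m n, H (shift p m n) = H p.
Hypothesis H_floors : forall p q,
  (forall l, In l A -> Int_part (level l q) = Int_part (level l p)) -> H q = H p.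

Lemma open2_in_compl_value (P : Z -> Prop) : open2 (fun x => in_compl A x /\ P (H x)).
Proof.
  intros p [Hc HP]. destruct (in_compl_near A p Hc) as [e [He Hnear]].
  exists e. split; [exact He |]. intros q Hx Hy. specialize (Hnear q Hx Hy). split.
  - intros l Hl. exact (not_on_line_in_strip l q _ (Hnear l Hl)).
  - rewrite (H_floors p q); [exact HP |].
    intros l Hl. exact (Int_part_in_strip _ _ (Hnear l Hl)).
Qed.

Lemma same_chamber_invariant p q : same_chamber A p q -> H p = H q.
Proof.
  intros [S [[_ Hsep] [HSc [Sp Sq]]]].
  apply NNPP. intros Hne. apply Hsep.
  exists (fun x => in_compl A x /\ H x = H p), (fun x => in_compl A x /\ H x <> H p).
  split; [| split; [| split; [| split; [| split; [| split; [| split]]]]]].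
  1, 2: intros x m n; rewrite in_compl_shift, H_shift; tauto.
  - exact (open2_in_compl_value (fun z => z = H p)).
  - exact (open2_in_compl_value (fun z => z <> H p)).
  - intros x Sx. destruct (Z.eq_dec (H x) (H p)); [left | right]; auto.
  - intros x _ [_ E] [_ N]. auto.
  - exists p. auto.
  - exists q. auto.
Qed.

End ChamberInvariant.

Definition floor_comb (c1 c2 c3 : Z) (l1 l2 l3 : line) (p : pt) : Z :=
  (c1 * Int_part (level l1 p) + c2 * Int_part (level l2 p) + c3 * Int_part (level l3 p))%Z.

Lemma floor_comb_shift c1 c2 c3 l1 l2 l3 p m n :
  (c1 * la l1 + c2 * la l2 + c3 * la l3 = 0)%Z -> (c1 * lb l1 + c2 * lb l2 + c3 * lb l3 = 0)%Z ->
  floor_comb c1 c2 c3 l1 l2 l3 (shift p m n) = floor_comb c1 c2 c3 l1 l2 l3 p.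
Proof.
  intros Ha Hb. unfold floor_comb. rewrite !Int_part_level_shift.
  transitivity (c1 * Int_part (level l1 p) + c2 * Int_part (level l2 p) + c3 * Int_part (level l3 p)
    + m * (c1 * la l1 + c2 * la l2 + c3 * la l3) + n * (c1 * lb l1 + c2 * lb l2 + c3 * lb l3))%Z;
    [ring | rewrite Ha, Hb; ring].
Qed.

Lemma same_chamber_floor_comb c1 c2 c3 l1 l2 l3 p q :
  (c1 * la l1 + c2 * la l2 + c3 * la l3 = 0)%Z -> (c1 * lb l1 + c2 * lb l2 + c3 * lb l3 = 0)%Z ->
  same_chamber (l1 :: l2 :: l3 :: nil) p q ->
  floor_comb c1 c2 c3 l1 l2 l3 p = floor_comb c1 c2 c3 l1 l2 l3 q.
Proof.
  intros Ha Hb. apply same_chamber_invariant.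
  - intros x m n. now apply floor_comb_shift.
  - intros x y E. unfold floor_comb. rewrite !E; simpl; auto.
Qed.

Lemma unit_interval_connected (U V : R -> Prop) :
  (forall t, U t -> exists d, 0 < d /\ forall s, Rabs (s - t) < d -> U s) ->
  (forall t, V t -> exists d, 0 < d /\ forall s, Rabs (s - t) < d -> V s) ->
  U 0 -> V 1 -> (forall t, 0 <= t <= 1 -> U t \/ V t) ->
  (forall t, 0 <= t <= 1 -> U t -> V t -> False) -> False.
Proof.
  intros oU oV U0 V1 Cov Dis.
  set (E := fun t => 0 <= t <= 1 /\ forall s, 0 <= s <= t -> U s).
  assert (E0 : E 0) by (split; [lra | intros s Hs; replace s with 0 by lra; exact U0]).
  destruct (completeness E) as [T [HT1 HT2]]; [exists 1; intros t [Ht _]; lra | eauto |].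
  assert (T0 : 0 <= T) by (apply HT1; auto).
  assert (T1 : T <= 1) by (apply HT2; intros t [Ht _]; lra).
  assert (Approx : forall d, 0 < d -> exists t, E t /\ T - d < t).
  { intros d Hd. apply NNPP. intros N. assert (T <= T - d); [| lra].
    apply HT2. intros t Et. apply Rnot_lt_le. intros Hlt. apply N. eauto. }
  assert (Below : forall s, 0 <= s < T -> U s).
  { intros s Hs. destruct (Approx (T - s)) as [t [[Ht Et] Hst]]; [lra |]. apply Et. lra. }
  destruct (Cov T (conj T0 T1)) as [UT | VT].
  - (* U also covers a neighbourhood of T, so E extends beyond T unless T = 1 *)
    destruct (oU T UT) as [d [Hd Hn]].
    destruct (Req_dec T 1) as [-> | n1]; [exact (Dis 1 ltac:(lra) UT V1) |].
    set (t' := Rmin (T + d / 2) 1).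
    assert (T < t') by (apply Rmin_glb_lt; lra).
    assert (t' <= T); [| lra].
    apply HT1. split; [split; [apply Rmin_case; lra | apply Rmin_r] |].
    intros s Hs. destruct (Rlt_dec s T) as [Hlt | Hge].
    + apply Below. lra.
    + apply Hn. assert (t' <= T + d / 2) by apply Rmin_l. apply Rabs_def1; lra.
  - (* then points of E just below T lie in V as well *)
    destruct (oV T VT) as [d [Hd Hn]].
    destruct (Approx d Hd) as [t [[Ht Et] Htd]].
    assert (t <= T) by (apply HT1; split; auto).
    apply (Dis t Ht); [apply Et; lra | apply Hn, Rabs_def1; lra].
Qed.

Definition seg (P Q : pt) (t : R) : pt :=
  (fst P + t * (fst Q - fst P), snd P + t * (snd Q - snd P)).

Lemma seg_near (W : pt -> Prop) P Q t : open2 W -> W (seg P Q t) ->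
  exists d, 0 < d /\ forall s, Rabs (s - t) < d -> W (seg P Q s).
Proof.
  intros HW Wt. destruct (HW _ Wt) as [e [He Hq]].
  set (K := Rabs (fst Q - fst P) + Rabs (snd Q - snd P) + 1).
  pose proof (Rabs_pos (fst Q - fst P)). pose proof (Rabs_pos (snd Q - snd P)).
  assert (HK : 0 < K) by (unfold K; lra).
  exists (e / K). split; [now apply Rdiv_lt_0_compat |].
  intros s Hs.
  assert (Hst : Rabs (s - t) * K < e).
  { apply (Rmult_lt_compat_r K) in Hs; [| exact HK]. unfold Rdiv in Hs.
    rewrite Rmult_assoc, Rinv_l, Rmult_1_r in Hs; lra. }
  assert (Hsmall : forall a, Rabs a <= K -> Rabs ((s - t) * a) < e).
  { intros a Ha. rewrite Rabs_mult. pose proof (Rabs_pos (s - t)).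
    assert (Rabs (s - t) * Rabs a <= Rabs (s - t) * K) by (apply Rmult_le_compat_l; lra). lra. }
  apply Hq; unfold seg; simpl.
  - replace (fst P + s * (fst Q - fst P) - (fst P + t * (fst Q - fst P)))
      with ((s - t) * (fst Q - fst P)) by ring.
    apply Hsmall. unfold K. lra.
  - replace (snd P + s * (snd Q - snd P) - (snd P + t * (snd Q - snd P)))
      with ((s - t) * (snd Q - snd P)) by ring.
    apply Hsmall. unfold K. lra.
Qed.

Definition convex (C : pt -> Prop) : Prop :=
  forall P Q t, C P -> C Q -> 0 <= t <= 1 -> C (seg P Q t).

Lemma torus_connected_of_convex S C :
  invariant S -> convex C -> (forall x, C x -> S x) ->
  (forall x, S x -> exists m n, C (shift x m n)) -> torus_connected S.
Proof.
  intros iS cC CS SC. split; [exact iS |].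
  intros [U [V [iU [iV [oU [oV [Cov [Dis [[p [Sp Up]] [q [Sq Vq]]]]]]]]]]].
  destruct (SC p Sp) as [a [b Cp]]. destruct (SC q Sq) as [c [d Cq]].
  set (P := shift p a b) in *. set (Q := shift q c d) in *.
  assert (Hseg : forall t, 0 <= t <= 1 -> S (seg P Q t)) by (intros t Ht; apply CS, cC; auto).
  apply (unit_interval_connected (fun t => U (seg P Q t)) (fun t => V (seg P Q t))).
  - intros t Ut. exact (seg_near U P Q t oU Ut).
  - intros t Vt. exact (seg_near V P Q t oV Vt).
  - replace (seg P Q 0) with P by (unfold seg; destruct P; simpl; f_equal; ring).
    apply iU, Up.
  - replace (seg P Q 1) with Q by (unfold seg; destruct P, Q; simpl; f_equal; ring).
    apply iV, Vq.
  - intros t Ht. apply Cov, Hseg, Ht.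
  - intros t Ht. apply Dis, Hseg, Ht.
Qed.

Lemma in_strip_convex_comb f a b t : in_strip f a -> in_strip f b -> 0 <= t <= 1 ->
  in_strip f (a + t * (b - a)).
Proof.
  unfold in_strip. intros [Ha1 Ha2] [Hb1 Hb2] [Ht0 Ht1].
  assert (0 <= t * (b - a) <= b - a \/ b - a <= t * (b - a) <= 0)
    by (destruct (Rle_dec a b); [left | right]; split; nra).
  lra.
Qed.

Lemma convex_strip l f : convex (fun p => in_strip f (level l p)).
Proof.
  intros P Q t HP HQ Ht.
  replace (level l (seg P Q t)) with (level l P + t * (level l Q - level l P))
    by (unfold level, seg; simpl; ring).
  now apply in_strip_convex_comb.
Qed.

Lemma convex_and C D : convex C -> convex D -> convex (fun p => C p /\ D p).
Proof. intros cC cD P Q t [] [] Ht. split; [apply cC | apply cD]; auto. Qed.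

Definition vert_line : line := Line 1 0 0 eq_refl.
Definition horiz_line : line := Line 0 1 0 eq_refl.
Definition slanted_line (m : nat) : line := Line 1 (Z.of_nat m) (1/2) (Z.gcd_1_l _).
Definition model_arr (m : nat) : list line := vert_line :: horiz_line :: slanted_line m :: nil.

Lemma level_vert p : level vert_line p = fst p.
Proof. unfold level; simpl; ring. Qed.

Lemma level_horiz p : level horiz_line p = snd p.
Proof. unfold level; simpl; ring. Qed.

Lemma level_slanted m p : level (slanted_line m) p = fst p + INR m * snd p - 1/2.
Proof. unfold level; simpl. rewrite INR_IZR_INZ. ring. Qed.

Definition chamber_index (m : nat) : pt -> Z :=
  floor_comb (-1) (- Z.of_nat m) 1 vert_line horiz_line (slanted_line m).

Definition model_chamber (m : nat) (j : Z) (x : pt) : Prop :=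
  in_compl (model_arr m) x /\ chamber_index m x = j.

Definition model_box (m : nat) (j : Z) (p : pt) : Prop :=
  in_strip 0 (level vert_line p) /\ in_strip 0 (level horiz_line p) /\
  in_strip j (level (slanted_line m) p).

Lemma model_box_chamber m j p : model_box m j p -> model_chamber m j p.
Proof.
  intros (H1 & H2 & H3). split.
  - intros l [<- | [<- | [<- | []]]]; eapply not_on_line_in_strip; eauto.
  - unfold chamber_index, floor_comb.
    rewrite (Int_part_in_strip _ _ H1), (Int_part_in_strip _ _ H2), (Int_part_in_strip _ _ H3).
    ring.
Qed.

Lemma model_chamber_box m j p : model_chamber m j p ->
  model_box m j (shift p (- Int_part (fst p)) (- Int_part (snd p))).
Proof.
  intros [C E]. set (p' := shift p _ _).
  assert (C' : in_compl (model_arr m) p') by (apply in_compl_shift, C).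
  assert (Hs : forall l, In l (model_arr m) -> in_strip (Int_part (level l p')) (level l p'))
    by (intros l Hl; apply in_strip_level, C', Hl).
  assert (F : forall l, Int_part (level l p') =
      (Int_part (level l p) - la l * Int_part (fst p) - lb l * Int_part (snd p))%Z)
    by (intros l; unfold p'; rewrite Int_part_level_shift; ring).
  unfold chamber_index, floor_comb in E. rewrite level_vert, level_horiz in E.
  split; [| split].
  - replace 0%Z with (Int_part (level vert_line p')).
    + apply Hs. left; reflexivity.
    + rewrite F, level_vert. cbn [la lb vert_line horiz_line slanted_line]. lia.
  - replace 0%Z with (Int_part (level horiz_line p')).
    + apply Hs. right; left; reflexivity.
    + rewrite F, level_horiz. cbn [la lb vert_line horiz_line slanted_line]. lia.
  - replace j with (Int_part (level (slanted_line m) p')).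
    + apply Hs. right; right; left; reflexivity.
    + rewrite F. cbn [la lb vert_line horiz_line slanted_line]. lia.
Qed.

Lemma chamber_index_shift m p a b : chamber_index m (shift p a b) = chamber_index m p.
Proof. apply floor_comb_shift; cbn [la lb vert_line horiz_line slanted_line]; lia. Qed.

Lemma same_chamber_index m p q :
  same_chamber (model_arr m) p q -> chamber_index m p = chamber_index m q.
Proof. apply same_chamber_floor_comb; cbn [la lb vert_line horiz_line slanted_line]; lia. Qed.

Lemma model_chamber_connected m j : torus_connected (model_chamber m j).
Proof.
  apply (torus_connected_of_convex _ (model_box m j)).
  - intros x a b. unfold model_chamber. rewrite in_compl_shift, chamber_index_shift. tauto.
  - exact (convex_and _ _ (convex_strip _ _) (convex_and _ _ (convex_strip _ _) (convex_strip _ _))).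
  - apply model_box_chamber.
  - intros x Hx. eexists; eexists. now apply model_chamber_box.
Qed.

Lemma model_box_index_range m j p : model_box m j p -> (-1 <= j <= Z.of_nat m)%Z.
Proof.
  unfold model_box, in_strip. rewrite level_vert, level_horiz, level_slanted.
  intros ([Hx1 Hx2] & [Hy1 Hy2] & [H1 H2]). simpl in *.
  pose proof (pos_INR m). assert (INR m * snd p <= INR m) by nra.
  assert (Hlo : IZR (-2) < IZR j) by (simpl; nra).
  assert (Hhi : IZR j < IZR (Z.of_nat m + 1)) by (rewrite plus_IZR, <- INR_IZR_INZ; simpl; lra).
  apply lt_IZR in Hlo, Hhi. lia.
Qed.

(* one point on the diagonal of the unit square in each of the m + 2 chambers *)
Definition chamber_rep (m J : nat) : pt :=
  ((INR J + 1/2) / (INR m + 2), (INR J + 1/2) / (INR m + 2)).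

Lemma chamber_rep_box m J : (J < m + 2)%nat -> model_box m (Z.of_nat J - 1) (chamber_rep m J).
Proof.
  intros HJ. assert (HJ' : INR J <= INR m + 1) by (rewrite <- S_INR; apply le_INR; lia).
  pose proof (pos_INR J). pose proof (pos_INR m).
  set (r := (INR J + 1/2) / (INR m + 2)).
  assert (Hr : 0 < r < 1).
  { unfold r. split; [apply Rdiv_lt_0_compat; lra |].
    apply (Rmult_lt_reg_r (INR m + 2)); [lra |]. field_simplify; lra. }
  unfold model_box, in_strip, chamber_rep.
  rewrite level_vert, level_horiz, level_slanted. fold r. simpl.
  rewrite minus_IZR, <- INR_IZR_INZ.
  assert (E : r + INR m * r - 1/2 = INR J - (INR J + 1/2) / (INR m + 2)) by (unfold r; field; lra).
  rewrite E. fold r. lra.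
Qed.

Lemma ForallOrdPairs_map_seq {A} (R : A -> A -> Prop) (f : nat -> A) n : forall a,
  (forall i j, (a <= i)%nat -> (i < j)%nat -> (j < a + n)%nat -> R (f i) (f j)) ->
  ForallOrdPairs R (map f (seq a n)).
Proof.
  induction n as [| n IH]; intros a H; simpl; constructor.
  - apply Forall_forall. intros y Hy. apply in_map_iff in Hy as [j [<- Hj]].
    apply in_seq in Hj. apply H; lia.
  - apply IH. intros i j Hi Hij Hj. apply H; lia.
Qed.

Lemma model_f2 m : f2_is (model_arr m) (m + 2).
Proof.
  exists (map (chamber_rep m) (seq 0 (m + 2))). split; [| split; [| split]].
  - now rewrite length_map, length_seq.
  - apply Forall_forall. intros x Hx. apply in_map_iff in Hx as [J [<- HJ]].
    apply in_seq in HJ. apply (model_box_chamber m (Z.of_nat J - 1)), chamber_rep_box. lia.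
  - apply ForallOrdPairs_map_seq. intros i J _ HiJ HJ Hsame.
    apply same_chamber_index in Hsame.
    rewrite (proj2 (model_box_chamber _ _ _ (chamber_rep_box m i ltac:(lia)))),
      (proj2 (model_box_chamber _ _ _ (chamber_rep_box m J ltac:(lia)))) in Hsame. lia.
  - intros p C. set (j := chamber_index m p).
    assert (Hp : model_chamber m j p) by (split; auto).
    pose proof (model_box_index_range _ _ _ (model_chamber_box _ _ _ Hp)).
    set (J := Z.to_nat (j + 1)).
    assert (HJ : model_chamber m j (chamber_rep m J)).
    { replace j with (Z.of_nat J - 1)%Z at 1 by lia. apply model_box_chamber, chamber_rep_box. lia. }
    exists (chamber_rep m J). split; [apply in_map, in_seq; lia |].
    exists (model_chamber m j). split; [apply model_chamber_connected |].
    split; [intros x [Cx _]; exact Cx | auto].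
Qed.

Lemma on_vert p : on_line vert_line p <-> exists z, fst p = IZR z.
Proof. now rewrite on_line_level, level_vert. Qed.

Lemma on_horiz p : on_line horiz_line p <-> exists z, snd p = IZR z.
Proof. now rewrite on_line_level, level_horiz. Qed.

Lemma on_slanted m p : on_line (slanted_line m) p <-> exists z, fst p + INR m * snd p - 1/2 = IZR z.
Proof. now rewrite on_line_level, level_slanted. Qed.

Lemma not_same_toric_line_witness l l' p : on_line l p -> ~ on_line l' p -> ~ same_toric_line l l'.
Proof. intros H H' E. apply H', E, H. Qed.

Lemma origin_on_vert : on_line vert_line (0, 0).
Proof. apply on_vert. exists 0%Z. reflexivity. Qed.

Lemma origin_on_horiz : on_line horiz_line (0, 0).
Proof. apply on_horiz. exists 0%Z. reflexivity. Qed.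

Lemma origin_not_on_slanted m : ~ on_line (slanted_line m) (0, 0).
Proof.
  intros [z Hz]%on_slanted. simpl in Hz. apply (IZR_neq_half 0 z). simpl. lra.
Qed.

Lemma vert_horiz_distinct : ~ same_toric_line vert_line horiz_line.
Proof.
  apply (not_same_toric_line_witness _ _ (0, 1/2)); [apply on_vert; now exists 0%Z |].
  intros [z Hz]%on_horiz. simpl in Hz. apply (IZR_neq_half z 0). simpl. lra.
Qed.

Lemma model_arrangement m : toric_arrangement (model_arr m).
Proof.
  split.
  - repeat constructor.
    + exact vert_horiz_distinct.
    + exact (not_same_toric_line_witness _ _ _ origin_on_vert (origin_not_on_slanted m)).
    + exact (not_same_toric_line_witness _ _ _ origin_on_horiz (origin_not_on_slanted m)).
  - exists vert_line, horiz_line. split; [now left | split; [right; now left |]].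
    unfold same_type; simpl. lia.
Qed.

Definition slanted_vertex (m j : nat) : pt := (0, (INR j + 1/2) / INR m).

Definition model_vertices (m : nat) : list pt :=
  (0, 0) :: (1/2, 0) :: map (slanted_vertex m) (seq 0 m).

Lemma model_vertices_are_vertices m : Forall (vertex (model_arr m)) (model_vertices m).
Proof.
  assert (Dh : ~ same_toric_line horiz_line (slanted_line m))
    by exact (not_same_toric_line_witness _ _ _ origin_on_horiz (origin_not_on_slanted m)).
  assert (Dv : ~ same_toric_line vert_line (slanted_line m))
    by exact (not_same_toric_line_witness _ _ _ origin_on_vert (origin_not_on_slanted m)).
  constructor; [| constructor].
  - exists vert_line, horiz_line.
    repeat split; [now left | right; now left | exact vert_horiz_distinct | apply origin_on_vert | apply origin_on_horiz].
  - exists horiz_line, (slanted_line m). repeat split; [right; now left | right; right; now left | exact Dh | |].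
    + apply on_horiz. now exists 0%Z.
    + apply on_slanted. exists 0%Z. simpl. lra.
  - apply Forall_forall. intros x Hx. apply in_map_iff in Hx as [j [<- Hj]].
    apply in_seq in Hj. assert (Hm : 0 < INR m) by (apply lt_0_INR; lia).
    exists vert_line, (slanted_line m). repeat split; [now left | right; right; now left | exact Dv | |].
    + apply on_vert. now exists 0%Z.
    + apply on_slanted. exists (Z.of_nat j). unfold slanted_vertex; simpl.
      rewrite <- INR_IZR_INZ. field. lra.
Qed.

Lemma tor_eq_fst p q : tor_eq p q -> exists z, fst p = fst q + IZR z.
Proof. intros [a [b ->]]. now exists a. Qed.

Lemma tor_eq_snd p q : tor_eq p q -> exists z, snd p = snd q + IZR z.
Proof. intros [a [b ->]]. now exists b. Qed.

Lemma slanted_vertex_snd_congr m i j z : (i < m)%nat -> (j < m)%nat ->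
  (INR i + 1/2) / INR m = (INR j + 1/2) / INR m + IZR z -> i = j.
Proof.
  intros Hi Hj E. assert (Hm : 0 < INR m) by (apply lt_0_INR; lia).
  assert (E' : INR i = INR j + IZR z * INR m).
  { apply (Rmult_eq_compat_r (INR m)) in E. field_simplify in E; lra. }
  rewrite !INR_IZR_INZ, <- mult_IZR, <- plus_IZR in E'. apply eq_IZR in E'.
  destruct (Z.lt_trichotomy z 0) as [Hz | [-> | Hz]]; nia.
Qed.

Lemma model_vertices_distinct m : ForallOrdPairs (fun x y => ~ tor_eq x y) (model_vertices m).
Proof.
  assert (Hsnd : forall j, (j < m)%nat -> forall z, (INR j + 1/2) / INR m <> IZR z).
  { intros j Hj z E. assert (Hm : 0 < INR m) by (apply lt_0_INR; lia).
    apply (IZR_neq_half (z * Z.of_nat m) (Z.of_nat j)).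
    rewrite mult_IZR, <- !INR_IZR_INZ, <- E. field. lra. }
  constructor; [constructor | constructor].
  - intros [z Hz]%tor_eq_fst. simpl in Hz. apply (IZR_neq_half (- z) 0). rewrite opp_IZR. simpl. lra.
  - apply Forall_forall. intros x Hx. apply in_map_iff in Hx as [j [<- Hj]].
    apply in_seq in Hj. intros [z Hz]%tor_eq_snd. simpl in Hz.
    apply (Hsnd j ltac:(lia) (- z)%Z). rewrite opp_IZR. lra.
  - apply Forall_forall. intros x Hx. apply in_map_iff in Hx as [j [<- Hj]].
    intros [z Hz]%tor_eq_fst. simpl in Hz. apply (IZR_neq_half z 0). simpl. lra.
  - apply ForallOrdPairs_map_seq. intros i j _ Hij Hj [z Hz]%tor_eq_snd.
    simpl in Hz. apply slanted_vertex_snd_congr in Hz; lia.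
Qed.

Lemma vert_horiz_meet m p : on_line vert_line p -> on_line horiz_line p ->
  exists q, In q (model_vertices m) /\ tor_eq p q.
Proof.
  intros [a Ha]%on_vert [b Hb]%on_horiz. exists (0, 0). split; [now left |].
  exists a, b. destruct p as [x y]. unfold shift; simpl in *. subst. f_equal; ring.
Qed.

Lemma horiz_slanted_meet m p : on_line horiz_line p -> on_line (slanted_line m) p ->
  exists q, In q (model_vertices m) /\ tor_eq p q.
Proof.
  intros [b Hb]%on_horiz [c Hc]%on_slanted. exists (1/2, 0). split; [right; now left |].
  exists (c - Z.of_nat m * b)%Z, b. destruct p as [x y]. unfold shift; simpl in *.
  subst y. rewrite minus_IZR, mult_IZR, <- INR_IZR_INZ. f_equal; lra.
Qed.

Lemma vert_slanted_meet m p : on_line vert_line p -> on_line (slanted_line m) p ->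
  exists q, In q (model_vertices m) /\ tor_eq p q.
Proof.
  intros [a Ha]%on_vert [c Hc]%on_slanted. destruct p as [x y]. simpl in *. subst x.
  destruct m as [| m'].
  - exfalso. simpl in Hc. apply (IZR_neq_half a c). lra.
  - set (M := Z.of_nat (S m')). assert (HM : (0 < M)%Z) by (unfold M; lia).
    (* m y = (c - a) + 1/2, and c - a = M q + j with 0 <= j < M *)
    set (j := ((c - a) mod M)%Z). set (q := ((c - a) / M)%Z).
    assert (Hdiv : (c - a = M * q + j)%Z) by (apply Z.div_mod; lia).
    assert (Hj : (0 <= j < M)%Z) by (apply Z.mod_pos_bound; lia).
    exists (slanted_vertex (S m') (Z.to_nat j)). split.
    + right; right. apply in_map, in_seq. unfold M in Hj. lia.
    + exists a, q. unfold shift, slanted_vertex; cbn [fst snd]. f_equal; [ring |].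
      rewrite INR_IZR_INZ, Z2Nat.id by lia. rewrite INR_IZR_INZ in Hc |- *. fold M in Hc |- *.
      assert (HMr : 0 < IZR M) by (apply IZR_lt; auto).
      assert (E : IZR M * y = IZR (c - a) + 1/2) by (rewrite minus_IZR; lra).
      rewrite Hdiv, plus_IZR, mult_IZR in E.
      apply (Rmult_eq_reg_l (IZR M)); [rewrite E; field | ]; lra.
Qed.

Lemma model_f0 m : f0_is (model_arr m) (m + 2).
Proof.
  exists (model_vertices m). split; [simpl; rewrite length_map, length_seq; lia |].
  split; [apply model_vertices_are_vertices |]. split; [apply model_vertices_distinct |].
  intros p [l [l' [Hl [Hl' [Hne [Ho Ho']]]]]].
  destruct Hl as [<- | [<- | [<- | []]]]; destruct Hl' as [<- | [<- | [<- | []]]];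
    solve [ exfalso; now apply Hne
          | eapply vert_horiz_meet; eauto | eapply horiz_slanted_meet; eauto
          | eapply vert_slanted_meet; eauto ].
Qed.

Lemma model_realises f0 : (2 <= f0)%nat -> exists A : list line,
  toric_arrangement A /\ length A = 3%nat /\ f0_is A f0 /\ f2_is A f0.
Proof.
  intros H. replace f0 with (f0 - 2 + 2)%nat by lia. exists (model_arr (f0 - 2)).
  split; [apply model_arrangement | split; [reflexivity | split; [apply model_f0 | apply model_f2]]].
Qed.

Definition det (l l' : line) : Z := (la l * lb l' - la l' * lb l)%Z.
Definition dot (l l' : line) : Z := (la l * la l' + lb l * lb l')%Z.

Lemma normal_neq0 l : ~ (la l = 0%Z /\ lb l = 0%Z).
Proof. intros [H1 H2]. pose proof (lcop l) as C. rewrite H1, H2 in C. discriminate. Qed.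

Lemma dot_self_pos l : (0 < dot l l)%Z.
Proof. pose proof (normal_neq0 l). unfold dot. nia. Qed.

Lemma same_type_of_det0 l l' : det l l' = 0%Z -> same_type l' l.
Proof.
  unfold det, same_type. intros D. pose proof (lcop l) as C. pose proof (lcop l') as C'.
  pose proof (normal_neq0 l) as N.
  set (a := la l) in *. set (b := lb l) in *. set (a' := la l') in *. set (b' := lb l') in *.
  assert (H1 : (a | a')%Z) by (apply (Z.gauss a b a'); auto; exists b'; lia).
  assert (H2 : (a' | a)%Z) by (apply (Z.gauss a' b' a); auto; exists b; lia).
  assert (H3 : (b | b')%Z) by (apply (Z.gauss b a b'); [exists a'; lia | now rewrite Z.gcd_comm]).
  assert (H4 : (b' | b)%Z) by (apply (Z.gauss b' a' b); [exists a; lia | now rewrite Z.gcd_comm]).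
  apply Z.divide_antisym_abs in H1; auto. apply Z.divide_antisym_abs in H3; auto.
  clearbody a b a' b'.
  destruct (Z.abs_eq_cases _ _ H1) as [-> | ->], (Z.abs_eq_cases _ _ H3) as [-> | ->]; lia.
Qed.

Lemma same_type_refl l : same_type l l.
Proof. now left. Qed.

Lemma same_type_sym l l' : same_type l l' -> same_type l' l.
Proof. unfold same_type; lia. Qed.

Lemma same_type_trans l l' l'' : same_type l l' -> same_type l' l'' -> same_type l l''.
Proof. unfold same_type; lia. Qed.

Lemma same_toric_line_of_common_point l l' p0 :
  same_type l l' -> on_line l p0 -> on_line l' p0 -> same_toric_line l l'.
Proof.
  intros T [z Hz]%on_line_level [z' Hz']%on_line_level p. rewrite !on_line_level.
  destruct T as [[Ea Eb] | [Ea Eb]].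
  - assert (K : level l p = level l' p + (level l p0 - level l' p0)) by (unfold level; rewrite Ea, Eb; ring).
    rewrite K, Hz, Hz'. split; intros [w Hw].
    + exists (w - (z - z'))%Z. rewrite !minus_IZR. lra.
    + exists (w + (z - z'))%Z. rewrite plus_IZR, minus_IZR. lra.
  - assert (K : level l p = - level l' p + (level l p0 + level l' p0))
      by (unfold level; rewrite Ea, Eb, !opp_IZR; ring).
    rewrite K, Hz, Hz'. split; intros [w Hw].
    + exists (- w + (z + z'))%Z. rewrite plus_IZR, opp_IZR, plus_IZR. lra.
    + exists (- w + (z + z'))%Z. rewrite plus_IZR, opp_IZR, plus_IZR. lra.
Qed.

Lemma lines_meet l l' : ~ same_type l l' -> exists p, on_line l p /\ on_line l' p.
Proof.
  intros T. assert (D : IZR (det l l') <> 0).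
  { intros E. apply T, same_type_sym, same_type_of_det0, eq_IZR, E. }
  unfold det in D. rewrite minus_IZR, !mult_IZR in D.
  exists ((lc l * IZR (lb l') - lc l' * IZR (lb l)) / (IZR (la l) * IZR (lb l') - IZR (la l') * IZR (lb l)),
          (IZR (la l) * lc l' - IZR (la l') * lc l) / (IZR (la l) * IZR (lb l') - IZR (la l') * IZR (lb l))).
  split; apply on_line_level; exists 0%Z; unfold level; cbn [fst snd]; field; exact D.
Qed.

Lemma distinct_lines_In A l l' :
  distinct_lines A -> In l A -> In l' A -> ~ same_type l l' -> ~ same_toric_line l l'.
Proof.
  intros DA Hl Hl' T E.
  destruct (ForallOrdPairs_In DA _ _ Hl Hl') as [<- | [N | N]].
  - exact (T (same_type_refl l)).
  - exact (N E).
  - apply N. intros p. symmetry. apply E.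
Qed.

Lemma essential_transversal A l : essential A -> In l A -> exists l', In l' A /\ ~ same_type l l'.
Proof.
  intros [x [y [Hx [Hy T]]]] Hl.
  destruct (classic (same_type l x)) as [Tx | Tx]; [| eauto].
  exists y. split; [exact Hy |]. intros Ty. apply T. eapply same_type_trans; [apply same_type_sym |]; eauto.
Qed.

Lemma single_vertex_class A : f0_is A 1 -> exists r0, forall p, vertex A p -> tor_eq p r0.
Proof.
  intros [[| r0 [| ]] [Ls [_ [_ Cov]]]]; try discriminate.
  exists r0. intros p Hp. destruct (Cov p Hp) as [q [[<- | []] E]]. exact E.
Qed.

Lemma lines_through_single_vertex A r0 : toric_arrangement A ->
  (forall p, vertex A p -> tor_eq p r0) -> forall l, In l A -> on_line l r0.
Proof.
  intros [DA EA] V l Hl. destruct (essential_transversal A l EA Hl) as [l' [Hl' T]].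
  destruct (lines_meet l l' T) as [p [Hp Hp']].
  apply (on_line_tor_eq l p r0); [| exact Hp].
  apply V. exists l, l'. repeat split; auto. exact (distinct_lines_In A l l' DA Hl Hl' T).
Qed.

Lemma single_chamber_common A p q : f2_is A 1 -> in_compl A p -> in_compl A q ->
  exists r, same_chamber A p r /\ same_chamber A q r.
Proof.
  intros [[| r [| ]] [Ls [_ [_ Cov]]]] Cp Cq; try discriminate.
  destruct (Cov p Cp) as [? [[<- | []] Ep]]. destruct (Cov q Cq) as [? [[<- | []] Eq]].
  eauto.
Qed.

Lemma in_strip_frac_pos z n M : (0 < n < M)%Z -> in_strip z (IZR z + IZR n / IZR M).
Proof.
  intros [H1 H2]. apply IZR_lt in H1. apply IZR_lt in H2.
  assert (IZR n / IZR M * IZR M = IZR n) by (field; lra).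
  assert (0 < IZR n / IZR M) by (apply Rdiv_lt_0_compat; lra).
  assert (IZR n / IZR M < 1) by nra. split; lra.
Qed.

Lemma in_strip_frac_neg z n M : (- M < n < 0)%Z -> in_strip (z - 1) (IZR z + IZR n / IZR M).
Proof.
  intros H. replace (IZR z + IZR n / IZR M) with (IZR (z - 1) + IZR (n + M) / IZR M).
  - apply in_strip_frac_pos. lia.
  - assert (IZR M <> 0) by (apply not_0_IZR; lia). rewrite minus_IZR, plus_IZR. field. auto.
Qed.

(* The point r0 + (4 B d + s n) / (8 B^2), where d is the direction and n the normal vector of l3:
   for s = 1 and s = -1 it lies just above resp. just below l3, and far enough along l3 to stay
   on one fixed side of every other line through r0. *)
Definition probe (l3 : line) (B : Z) (r0 : pt) (s : Z) : pt :=
  (fst r0 + IZR (4 * B * lb l3 + s * la l3) / IZR (8 * B * B),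
   snd r0 + IZR (- 4 * B * la l3 + s * lb l3) / IZR (8 * B * B)).

Lemma level_probe l l3 B r0 s : level l (probe l3 B r0 s) =
  level l r0 + IZR (4 * B * det l l3 + s * dot l l3) / IZR (8 * B * B).
Proof.
  replace (4 * B * det l l3 + s * dot l l3)%Z with
    (la l * (4 * B * lb l3 + s * la l3) + lb l * (- 4 * B * la l3 + s * lb l3))%Z
    by (unfold det, dot; ring).
  unfold level, probe, Rdiv; cbn [fst snd]. repeat rewrite ?plus_IZR, ?mult_IZR. ring.
Qed.

Lemma probe_in_strip_transversal l l3 B r0 z : level l r0 = IZR z -> det l l3 <> 0%Z ->
  (Z.abs (det l l3) < B)%Z -> (Z.abs (dot l l3) < B)%Z ->
  exists f, forall s, (s = 1 \/ s = -1)%Z -> in_strip f (level l (probe l3 B r0 s)).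
Proof.
  intros Hz D HD Hd. destruct (Z_lt_le_dec 0 (det l l3)) as [Dp | Dn].
  - exists z. intros s Hs. rewrite level_probe, Hz. apply in_strip_frac_pos.
    destruct Hs as [-> | ->]; nia.
  - exists (z - 1)%Z. intros s Hs. rewrite level_probe, Hz. apply in_strip_frac_neg.
    destruct Hs as [-> | ->]; nia.
Qed.

Lemma probe_in_strip_own l3 B r0 z : level l3 r0 = IZR z -> (dot l3 l3 < B)%Z ->
  in_strip z (level l3 (probe l3 B r0 1)) /\ in_strip (z - 1) (level l3 (probe l3 B r0 (-1))).
Proof.
  intros Hz Hd. pose proof (dot_self_pos l3).
  assert (D0 : det l3 l3 = 0%Z) by (unfold det; ring).
  rewrite !level_probe, Hz, D0. split.
  - apply in_strip_frac_pos. nia.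
  - apply in_strip_frac_neg. nia.
Qed.

(* The Cramer-type invariant det(l2,l3) [t1] + det(l3,l1) [t2] + det(l1,l2) [t3], whose coefficients
   annihilate the normal vectors, jumps by det(l1,l2) across l3 at a common point of the three lines. *)
Lemma concurrent_lines_probes l1 l2 l3 r0 :
  det l1 l3 <> 0%Z -> det l2 l3 <> 0%Z ->
  on_line l1 r0 -> on_line l2 r0 -> on_line l3 r0 ->
  exists p q, in_compl (l1 :: l2 :: l3 :: nil) p /\ in_compl (l1 :: l2 :: l3 :: nil) q /\
    (floor_comb (det l2 l3) (det l3 l1) (det l1 l2) l1 l2 l3 p
     - floor_comb (det l2 l3) (det l3 l1) (det l1 l2) l1 l2 l3 q = det l1 l2)%Z.
Proof.
  intros D13 D23 [z1 Z1]%on_line_level [z2 Z2]%on_line_level [z3 Z3]%on_line_level.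
  set (B := (1 + Z.abs (dot l1 l3) + Z.abs (dot l2 l3) + dot l3 l3
             + Z.abs (det l1 l3) + Z.abs (det l2 l3))%Z).
  pose proof (dot_self_pos l3).
  destruct (probe_in_strip_transversal l1 l3 B r0 z1 Z1 D13) as [f1 F1]; [lia | lia |].
  destruct (probe_in_strip_transversal l2 l3 B r0 z2 Z2 D23) as [f2 F2]; [lia | lia |].
  destruct (probe_in_strip_own l3 B r0 z3 Z3) as [F3p F3n]; [lia |].
  pose proof (F1 1%Z ltac:(lia)) as F1p. pose proof (F1 (-1)%Z ltac:(lia)) as F1n.
  pose proof (F2 1%Z ltac:(lia)) as F2p. pose proof (F2 (-1)%Z ltac:(lia)) as F2n.
  exists (probe l3 B r0 1), (probe l3 B r0 (-1)). split; [| split].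
  - intros l [<- | [<- | [<- | []]]]; eapply not_on_line_in_strip; eauto.
  - intros l [<- | [<- | [<- | []]]]; eapply not_on_line_in_strip; eauto.
  - unfold floor_comb.
    rewrite (Int_part_in_strip _ _ F1p), (Int_part_in_strip _ _ F1n), (Int_part_in_strip _ _ F2p),
      (Int_part_in_strip _ _ F2n), (Int_part_in_strip _ _ F3p), (Int_part_in_strip _ _ F3n).
    ring.
Qed.

Lemma no_three_lines_one_vertex_one_chamber A :
  toric_arrangement A -> length A = 3%nat -> f0_is A 1 -> f2_is A 1 -> False.
Proof.
  intros TA L F0 F2. destruct (single_vertex_class A F0) as [r0 V].
  pose proof (lines_through_single_vertex A r0 TA V) as On.
  destruct A as [| l1 [| l2 [| l3 [| ]]]]; try discriminate.
  destruct TA as [DA _].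
  assert (Tr : forall l l', In l (l1 :: l2 :: l3 :: nil) -> In l' (l1 :: l2 :: l3 :: nil) ->
                 ~ same_toric_line l l' -> det l l' <> 0%Z).
  { intros l l' Hl Hl' N D. apply N.
    apply (same_toric_line_of_common_point l l' r0); auto. now apply same_type_sym, same_type_of_det0. }
  inversion DA as [| ? ? F1 DA2]; subst. inversion DA2 as [| ? ? F2' _]; subst.
  inversion F1 as [| ? ? N12 F1']; subst. inversion F1' as [| ? ? N13 _]; subst.
  inversion F2' as [| ? ? N23 _]; subst.
  assert (D12 := Tr l1 l2 ltac:(simpl; auto) ltac:(simpl; auto) N12).
  assert (D13 := Tr l1 l3 ltac:(simpl; auto) ltac:(simpl; auto) N13).
  assert (D23 := Tr l2 l3 ltac:(simpl; auto) ltac:(simpl; auto) N23).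
  destruct (concurrent_lines_probes l1 l2 l3 r0 D13 D23) as [p [q [Cp [Cq Jump]]]];
    try (apply On; simpl; auto).
  destruct (single_chamber_common _ p q F2 Cp Cq) as [r [Sp Sq]].
  assert (Hla : (det l2 l3 * la l1 + det l3 l1 * la l2 + det l1 l2 * la l3 = 0)%Z) by (unfold det; ring).
  assert (Hlb : (det l2 l3 * lb l1 + det l3 l1 * lb l2 + det l1 l2 * lb l3 = 0)%Z) by (unfold det; ring).
  pose proof (same_chamber_floor_comb _ _ _ _ _ _ _ _ Hla Hlb Sp).
  pose proof (same_chamber_floor_comb _ _ _ _ _ _ _ _ Hla Hlb Sq).
  lia.
Qed.

Theorem mainTheorem7 (f0 : nat) (hf0 : (1 <= f0)%nat) :
  (exists A : list line, toric_arrangement A /\ length A = 3%nat /\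
     f0_is A f0 /\ f2_is A f0) <-> (2 <= f0)%nat.
Proof.
  split; [| apply model_realises].
  intros [A [TA [L [F0 F2]]]].
  destruct (Nat.eq_dec f0 1) as [-> | n]; [| lia].
  exfalso. exact (no_three_lines_one_vertex_one_chamber A TA L F0 F2).
Qed.
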